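(* Let $T\ge1$, $\mathcal{X}_t=\mathbb{R}^{d_t}$ for $t\in\{0,\dots,T\}$, and $\mathcal{A}_1,\dots,\mathcal{A}_T$ finite sets. On a probability space, let $X_0$ be $\mathcal{X}_0$-valued, let $X_s(a_{1:s})$ be $\mathcal{X}_s$-valued random variables for $s\in\{1,\dots,T\}$, $a_{1:s}\in\mathcal{A}_{1:s}$, let $A_s$ be $\mathcal{A}_s$-valued random variables for $s\in\{1,\dots,T\}$, and fix $t\in\{1,\dots,T\}$ and real-valued random variables $(Y(a'_{1:t}) : a'_{1:t}\in\mathcal{A}_{1:t})$. Suppose that for some $a_{1:t}\in\mathcal{A}_{1:t}$, measurable $B_{0:t}\subseteq\mathcal{X}_{0:t}$ (i.e. measurable $B_s\subseteq\mathcal{X}_s$ for each $s$) and $\underline{y},\overline{y}\in\mathbb{R}$ we have $$\mathbb{P}(X_{0:t}(a_{1:t})\in B_{0:t})>0,\qquad \mathbb{P}\big(\underline{y}\le Y(a_{1:t})\le \overline{y}\ \big|\ X_{0:t}(a_{1:t})\in B_{0:t}\big)=1.$$ Define $N:=\max\{0\le s\le t : A_{1:s}=a_{1:s}\}$ and $$\underline{Y}:=\mathbb{1}(A_{1:t}=a_{1:t})\,Y(A_{1:t})+\mathbb{1}(A_{1:t}\ne a_{1:t})\,\underline{y},\qquad \overline{Y}:=\mathbb{1}(A_{1:t}=a_{1:t})\,Y(A_{1:t})+\mathbb{1}(A_{1:t}\ne a_{1:t})\,\overline{y}.$$ Then $$\mathbb{E}[\underline{Y}\mid X_{0:N}(A_{1:N})\in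 B_{0:N}]\le \mathbb{E}[Y(a_{1:t})\mid X_{0:t}(a_{1:t})\in B_{0:t}]\le \mathbb{E}[\overline{Y}\mid X_{0:N}(A_{1:N})\in B_{0:N}].$$
   Context: Notation: $z_{t:t'}=(z_t,\dots,z_{t'})$ (empty if $t>t'$); $X_{0:s}(a_{1:s})=(X_0,X_1(a_1),\dots,X_s(a_{1:s}))$; $X_{0:s}(a_{1:s})\in B_{0:s}$ means $X_0\in B_0$ and $X_r(a_{1:r})\in B_r$ for $1\le r\le s$; $Y(A_{1:t})$ and $X_{0:N}(A_{1:N})$ denote the potential outcomes evaluated at the random actions (with $N$ random); $A_{1:0}=a_{1:0}$ holds vacuously, so $N\ge0$ and $X_{0:0}(A_{1:0})=X_0$. No assumption is made on the joint dependence between the actions $A_{1:T}$ and the potential outcomes. *)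

From HB Require Import structures.
From mathcomp Require Import all_boot all_order all_algebra.
From mathcomp Require Import all_classical all_reals all_analysis.
Set Implicit Arguments. Unset Strict Implicit. Unset Printing Implicit Defensive.
Import Order.TTheory GRing.Theory Num.Theory.
Import numFieldNormedType.Exports.
Local Open Scope classical_set_scope.
Local Open Scope ring_scope.

(** Borel sigma-algebra on R^n = 'rV[R]_n (generated by the open sets of the
    usual (product/sup-norm) topology on row vectors). *)
Definition rV_borel (R : realType) (n : nat) : set (set 'rV[R]_n) :=
  <<s [set U : set 'rV[R]_n | open U] >>.

(** action histories a_{1:s} in A_1 x ... x A_s *)
Definition hist (Act : nat -> finType) (s : nat) := forall i : 'I_s, Act i.+1.

Definition prefix (Act : nat -> finType) (t : nat) (a : hist Act t)
  (r : 'I_t.+1) : hist Act r :=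
  fun i => a (widen_ord (ltnSE (ltn_ord r)) i).

Definition obs_hist (Act : nat -> finType) (Om : Type)
  (A : forall s : nat, Om -> Act s) (s : nat) (w : Om) : hist Act s :=
  fun i => A i.+1 w.

Definition agree (Act : nat -> finType) (Om : Type)
  (A : forall s : nat, Om -> Act s) (t : nat) (a : hist Act t)
  (r : 'I_t.+1) (w : Om) : bool :=
  [forall i : 'I_r, A i.+1 w == @prefix Act t a r i].

Definition agree_full (Act : nat -> finType) (Om : Type)
  (A : forall s : nat, Om -> Act s) (t : nat) (a : hist Act t) (w : Om) : bool :=
  [forall i : 'I_t, A i.+1 w == a i].

Definition Nidx (Act : nat -> finType) (Om : Type)
  (A : forall s : nat, Om -> Act s) (t : nat) (a : hist Act t) (w : Om) : nat :=
  \max_(r < t.+1 | agree A a r w) (r : nat).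

Definition ev_fixed (R : realType) (Act : nat -> finType) (Om : Type)
  (d : nat -> nat) (X : forall s : nat, hist Act s -> Om -> 'rV[R]_(d s))
  (B : forall s : nat, set 'rV[R]_(d s)) (t : nat) (a : hist Act t) : set Om :=
  [set w | forall r : 'I_t.+1, B r (X r (@prefix Act t a r) w)].

Definition ev_random (R : realType) (Act : nat -> finType) (Om : Type)
  (d : nat -> nat) (X : forall s : nat, hist Act s -> Om -> 'rV[R]_(d s))
  (B : forall s : nat, set 'rV[R]_(d s))
  (A : forall s : nat, Om -> Act s) (t : nat) (a : hist Act t) : set Om :=
  [set w | forall r : nat, (r <= Nidx A a w)%N -> B r (X r (@obs_hist Act Om A r w) w)].

Definition Ybound (R : realType) (Act : nat -> finType) (Om : Type)
  (A : forall s : nat, Om -> Act s) (t : nat) (a : hist Act t)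
  (Y : hist Act t -> Om -> R) (y : R) (w : Om) : R :=
  if agree_full A a w then Y (@obs_hist Act Om A t w) w else y.

Definition cond_prob (d0 : measure_display) (Om : measurableType d0)
  (R : realType) (P : probability Om R) (C F : set Om) : \bar R :=
  (P (C `&` F) * ((fine (P F))^-1)%:E)%E.

Definition cond_exp (d0 : measure_display) (Om : measurableType d0)
  (R : realType) (P : probability Om R) (Z : Om -> R) (F : set Om) : \bar R :=
  ((\int[P]_(w in F) (Z w)%:E) * ((fine (P F))^-1)%:E)%E.

From Pilot Require Import Defs.
From HB Require Import structures.
From mathcomp Require Import all_boot all_order all_algebra.
From mathcomp Require Import all_classical all_reals all_analysis.
From mathcomp Require Import measurable_realfun lra.
Import Order.TTheory GRing.Theory Num.Theory.
Import numFieldNormedType.Exports.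
Local Open Scope classical_set_scope.
Local Open Scope ring_scope.

(* Let F := {X_{0:t}(a_{1:t}) in B_{0:t}} and G := {X_{0:N}(A_{1:N}) in
   B_{0:N}}.  Then F is contained in G, and on G the agreement A_{1:t} = a_{1:t}
   forces N = t, hence F; so the bounding variable with default y equals y on
   G \ F.  Thus E[. | G] is a weighted average (mediant) of E[. | F] and y,
   with weights P F and P (G \ F).  For y = ylo both are below
   E[Y(a_{1:t}) | F], because the bounding variable is at most Y(a_{1:t}) on F
   and ylo is almost surely a lower bound of Y(a_{1:t}) on F; symmetrically
   for yhi. *)

Lemma mediant_le (R : realFieldType) (l e c p q : R) :
  0 < p -> 0 <= q -> l <= e -> c * p <= e -> (l + c * q) / (p + q) <= e / p.
Proof.
move=> p0 q0 le ce; have pq0 : 0 < p + q by rewrite ltr_wpDr.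
rewrite ler_pdivlMr // mulrAC ler_pdivrMr //.
have := ler_wpM2r (ltW p0) le; have := ler_wpM2r q0 ce; nra.
Qed.

Lemma mediant_ge (R : realFieldType) (u e c p q : R) :
  0 < p -> 0 <= q -> e <= u -> e <= c * p -> e / p <= (u + c * q) / (p + q).
Proof.
move=> p0 q0 eu ec; have := @mediant_le _ (- u) (- e) (- c) p q p0 q0.
by rewrite !mulNr -opprD !mulNr !lerN2; apply.
Qed.

Section conditional_expectation.
Context {d} {Om : measurableType d} {R : realType} (P : probability Om R).

Lemma measurable_forall_fin (I : finType) (S : I -> set Om) :
  (forall i, measurable (S i)) -> measurable [set w | forall i, S i w].
Proof.
move=> mS; have -> : [set w | forall i, S i w] = \bigcap_(i in [set: I]) S i.
  by apply/seteqP; split => w /= Sw i //; apply: Sw.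
exact: fin_bigcap_measurable finite_finset _.
Qed.

Lemma bounded_integrable {D : set Om} {Z : Om -> R} {M : R} :
  measurable D -> measurable_fun setT Z -> (forall w, `|Z w| <= M) ->
  P.-integrable D (EFin \o Z).
Proof.
move=> mD mZ ZM; apply: measurable_bounded_integrable => //.
- by rewrite (le_lt_trans (probability_le1 P mD)) ?ltey.
- exact: measurable_funTS.
- exists M; split; rewrite ?num_real // => x Mx w _ /=.
  by rewrite (le_trans (ZM w)) ?ltW.
Qed.

Lemma cond_prob1_setD0 (C F : set Om) : measurable C -> measurable F ->
  (0 < P F)%E -> cond_prob P C F = 1%E -> P (F `\` C) = 0%E.
Proof.
move=> mC mF PF0; rewrite /cond_prob setIC.
have finF := fin_num_measure P _ mF.
have finFC := fin_num_measure P _ (measurableI _ _ mF mC).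
rewrite -(fineK finFC) -EFinM; case=> FC1.
have PF0' : fine (P F) != 0 by rewrite gt_eqF // fine_gt0 // PF0 /= ltey_eq finF.
have FCF : fine (P (F `&` C)) = fine (P F).
  by rewrite -[LHS]mulr1 -(mulVf PF0') mulrA FC1 mul1r.
by rewrite measureD ?ltey_eq ?finF // -(fineK finF) -(fineK finFC) FCF subee.
Qed.

Lemma cond_expE (Z : Om -> R) (D : set Om) :
  measurable D -> P.-integrable D (EFin \o Z) ->
  cond_exp P Z D = ((\int[P]_(w in D) Z w) / fine (P D))%:E.
Proof.
by move=> mD iZ; rewrite /cond_exp EFinM fineK //; exact: integrable_fin_num.
Qed.

Lemma cond_exp_ae_eq {D : set Om} {Z Z' : Om -> R} :
  measurable D -> measurable_fun setT Z -> measurable_fun setT Z' ->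
  ae_eq P D Z Z' -> cond_exp P Z D = cond_exp P Z' D.
Proof.
move=> mD mZ mZ' ZZ'; rewrite /cond_exp; congr (_ * _)%E.
by apply: ae_eq_integral => //; [exact/measurable_EFinP/measurable_funTS..|
                                  exact: ae_eq_comp].
Qed.

Section extension_by_constant.
Context {F G : set Om} {c : R}.
Hypotheses (mF : measurable F) (mG : measurable G) (FG : F `<=` G).

Lemma cond_exp_setD_cst (Z : Om -> R) : P.-integrable G (EFin \o Z) ->
    (forall w, G w -> ~ F w -> Z w = c) ->
  cond_exp P Z G = ((\int[P]_(w in F) Z w + c * fine (P (G `\` F)))
                    / (fine (P F) + fine (P (G `\` F))))%:E.
Proof.
move=> iZ ZGF; have mGF : measurable (G `\` F) by exact: measurableD.
have disjF : [disjoint F & G `\` F] by apply/disj_setPS => w [? []].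
rewrite cond_expE // -{1 2}(setDUK FG) Rintegral_setU //; last by rewrite setDUK.
rewrite measureU ?fineD ?fin_num_measure //; last exact/disj_set2P.
congr ((_ + _) / _)%:E; rewrite -Rintegral_cst //.
by apply: eq_Rintegral => w /set_mem [Gw nFw]; rewrite ZGF.
Qed.

Hypothesis PF0 : (0 < P F)%E.

Let fineP_ge0 (D : set Om) : 0 <= fine (P D).
Proof. exact/fine_ge0/measure_ge0. Qed.

Let fineP_gt0 : 0 < fine (P F).
Proof. by rewrite fine_gt0 // PF0 ltey_eq fin_num_measure. Qed.

Lemma cond_exp_le_of_setD_cst (Z Z' : Om -> R) :
    P.-integrable F (EFin \o Z) -> P.-integrable G (EFin \o Z') ->
    (forall w, G w -> ~ F w -> Z' w = c) ->
    (forall w, F w -> Z' w <= Z w) -> (forall w, F w -> c <= Z w) ->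
  (cond_exp P Z' G <= cond_exp P Z F)%E.
Proof.
move=> iZ iZ' Z'c Z'Z cZ; rewrite cond_exp_setD_cst // cond_expE // lee_fin.
apply: mediant_le => //.
  by apply: le_Rintegral => //; exact: integrableS iZ'.
rewrite -Rintegral_cst //; apply: le_Rintegral => //.
exact: finite_measure_integrable_cst.
Qed.

Lemma cond_exp_ge_of_setD_cst (Z Z' : Om -> R) :
    P.-integrable F (EFin \o Z) -> P.-integrable G (EFin \o Z') ->
    (forall w, G w -> ~ F w -> Z' w = c) ->
    (forall w, F w -> Z w <= Z' w) -> (forall w, F w -> Z w <= c) ->
  (cond_exp P Z F <= cond_exp P Z' G)%E.
Proof.
move=> iZ iZ' Z'c ZZ' Zc; rewrite cond_exp_setD_cst // cond_expE // lee_fin.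
apply: mediant_ge => //.
  by apply: le_Rintegral => //; exact: integrableS iZ'.
rewrite -Rintegral_cst //; apply: le_Rintegral => //.
exact: finite_measure_integrable_cst.
Qed.

End extension_by_constant.
End conditional_expectation.

Section sharp_bounds.
Context d (Om : measurableType d) (R : realType) (P : probability Om R).
Variables (F G : set Om) (K : Om -> bool) (Z : Om -> R) (ylo yhi : R).
Hypotheses (mF : measurable F) (mG : measurable G).
Hypothesis mK : measurable [set w | K w].
Hypotheses (FG : F `<=` G) (GKF : forall w, G w -> K w -> F w).
Hypotheses (mZ : measurable_fun setT Z) (PF0 : (0 < P F)%E).
Hypothesis Zbnd : cond_prob P [set w | ylo <= Z w <= yhi] F = 1%E.

Let bnd := [set w | ylo <= Z w <= yhi].

Let mbnd : measurable bnd.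
Proof.
have := mZ measurableT _ (measurable_itv `[ylo, yhi]).
by rewrite setTI; congr measurable.
Qed.

Let null_Fbnd : P (F `\` bnd) = 0%E.
Proof. exact: cond_prob1_setD0. Qed.

Let negligible_Fbnd : P.-negligible (F `\` bnd).
Proof. by apply/negligibleP => //; exact: measurableD. Qed.

Let ylo_le_yhi : ylo <= yhi.
Proof.
rewrite leNgt; apply/negP => yhilo; suff bnd0 : bnd = set0.
  by move: PF0; rewrite -(setD0 F) -bnd0 null_Fbnd ltxx.
apply/seteqP; split => // w /andP[lo hi].
by have := lt_le_trans yhilo (le_trans lo hi); rewrite ltxx.
Qed.

(* Z is a.s. in [ylo, yhi] on F; clamping it there changes no conditional
   expectation but makes every integrand bounded, hence integrable. *)
Let clamp w := Num.max ylo (Num.min yhi (Z w)).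

Let clampE w : bnd w -> clamp w = Z w.
Proof. by move=> /andP[lo hi]; rewrite /clamp min_r // max_r. Qed.

Let clamp_bnd w : ylo <= clamp w <= yhi.
Proof. by rewrite /clamp le_max lexx ge_max ylo_le_yhi ge_min lexx. Qed.

Let norm_clamp w : `|clamp w| <= `|ylo| + `|yhi|.
Proof.
have /andP[lo hi] := clamp_bnd w; rewrite ler_norml.
have := ler_norm yhi; have := ler_norm (- ylo); rewrite normrN.
have := normr_ge0 ylo; have := normr_ge0 yhi.
by move=> *; apply/andP; split; lra.
Qed.

Let mclamp : measurable_fun setT clamp.
Proof. exact/measurable_maxr/measurable_minr. Qed.

Let ext (V : Om -> R) (y : R) w := if K w then V w else y.

Let mext V y : measurable_fun setT V -> measurable_fun setT (ext V y).
Proof.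
move=> mV; apply: measurable_fun_ifT => //.
by apply: (measurable_fun_bool true); rewrite setTI.
Qed.

Let ext_setD V y w : G w -> ~ F w -> ext V y w = y.
Proof. by move=> Gw nFw; rewrite /ext; case: ifP => // /(GKF w Gw). Qed.

Let ae_clamp : ae_eq P F Z clamp.
Proof.
apply: negligibleS negligible_Fbnd => w /= /not_implyP[Fw ZC]; split => // bw.
by apply: ZC; rewrite clampE.
Qed.

Let ae_ext_clamp y : ae_eq P G (ext Z y) (ext clamp y).
Proof.
apply: negligibleS negligible_Fbnd => w /= /not_implyP[Gw]; rewrite /ext.
case: ifP => // Kw ZC; split; first exact: GKF.
by move=> bw; apply: ZC; rewrite clampE.
Qed.

Let integrable_clamp : P.-integrable F (EFin \o clamp).
Proof. exact: (bounded_integrable P mF mclamp norm_clamp). Qed.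

Let integrable_ext y : P.-integrable G (EFin \o ext clamp y).
Proof.
have ext_bound w : `|ext clamp y w| <= `|ylo| + `|yhi| + `|y|.
  rewrite /ext; case: ifP => _; last by rewrite lerDr.
  by rewrite (le_trans (norm_clamp w)) ?lerDl.
exact: (bounded_integrable P mG (mext _ _ mclamp) ext_bound).
Qed.

Lemma cond_exp_extend_bounds :
  (cond_exp P (fun w => if K w then Z w else ylo) G
     <= cond_exp P Z F
     <= cond_exp P (fun w => if K w then Z w else yhi) G)%E.
Proof.
rewrite (cond_exp_ae_eq P mF mZ mclamp ae_clamp).
rewrite !(cond_exp_ae_eq P mG (mext _ _ mZ) (mext _ _ mclamp) (ae_ext_clamp _)).
apply/andP; split.
- apply: (cond_exp_le_of_setD_cst P (c := ylo)) => // [w|w _|w _].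
  + exact: ext_setD.
  + by rewrite /ext; case: ifP => // _; case/andP: (clamp_bnd w).
  + by case/andP: (clamp_bnd w).
- apply: (cond_exp_ge_of_setD_cst P (c := yhi)) => // [w|w _|w _].
  + exact: ext_setD.
  + by rewrite /ext; case: ifP => // _; case/andP: (clamp_bnd w).
  + by case/andP: (clamp_bnd w).
Qed.

End sharp_bounds.

Section action_histories.
Variables (Act : nat -> finType) (Om : Type) (A : forall s : nat, Om -> Act s).
Variables (t : nat) (a : hist Act t).

Let hist_ordinal_irr i (p q : (i < t)%N) : a (Ordinal p) = a (Ordinal q).
Proof. by rewrite (bool_irrelevance p q). Qed.

Lemma agree_leq {r r' : 'I_t.+1} {w} :
  (r' <= r)%N -> agree A a r w -> agree A a r' w.
Proof.
move=> r'r /forallP ag; apply/forallP => -[i ir'].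
have ir : (i < r)%N := leq_trans ir' r'r.
by rewrite (eqP (ag (Ordinal ir))); apply/eqP; exact: hist_ordinal_irr.
Qed.

Lemma agree_ord0 w : agree A a ord0 w.
Proof. by apply/forallP => -[]. Qed.

Lemma Nidx_leq w : (Nidx A a w <= t)%N.
Proof. by apply/bigmax_leqP => r _; rewrite -ltnS ltn_ord. Qed.

(* Agreement is downward closed, so the agreeing indices form the initial
   segment [0, N]. *)
Lemma leq_Nidx (r : 'I_t.+1) w : (r <= Nidx A a w)%N = agree A a r w.
Proof.
apply/idP/idP => [|ag]; last exact: (leq_bigmax_cond _ ag).
apply: contraLR => nag; rewrite -ltnNge.
have r0 : (0 < r)%N.
  rewrite lt0n; apply: contra nag => /eqP r0.
  by rewrite (_ : r = ord0) ?agree_ord0 //; exact: val_inj.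
rewrite -(prednK r0) ltnS; apply/bigmax_leqP => r' ag'.
rewrite -ltnS (prednK r0) ltnNge; apply: contra nag => rr'.
exact: agree_leq rr' ag'.
Qed.

Lemma agree_obs_hist {r : 'I_t.+1} {w} :
  agree A a r w -> obs_hist A (s := r) w = Defs.prefix a (r := r).
Proof.
by move/forallP => ag; apply: functional_extensionality_dep => i; exact/eqP.
Qed.

Lemma agree_full_agree w (r : 'I_t.+1) : agree_full A a w -> agree A a r w.
Proof.
move=> /forallP ag; apply/forallP => -[i ir].
have it : (i < t)%N := leq_trans ir (ltn_ord r).
by rewrite (eqP (ag (Ordinal it))); apply/eqP; exact: hist_ordinal_irr.
Qed.

Lemma agree_full_obs_hist w : agree_full A a w -> obs_hist A (s := t) w = a.
Proof.
by move/forallP => ag; apply: functional_extensionality_dep => i; exact/eqP.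
Qed.

Lemma YboundE (R : realType) (Y : hist Act t -> Om -> R) (y : R) :
  Ybound A a Y y = fun w => if agree_full A a w then Y a w else y.
Proof.
by apply: funext => w; rewrite /Ybound; case: ifP => // /agree_full_obs_hist ->.
Qed.

Variables (R : realType) (dim : nat -> nat).
Variables (X : forall s : nat, hist Act s -> Om -> 'rV[R]_(dim s)).
Variables (B : forall s : nat, set 'rV[R]_(dim s)).

Lemma ev_randomE : ev_random X B A a =
  [set w | forall r : 'I_t.+1,
     agree A a r w -> B r (X r (Defs.prefix a (r := r)) w)].
Proof.
apply/seteqP; split => w /= XB.
  by move=> r ag; rewrite -(agree_obs_hist ag); apply: XB; rewrite leq_Nidx.
move=> r rN; have rt : (r < t.+1)%N by rewrite ltnS (leq_trans rN) ?Nidx_leq.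
have ag : agree A a (Ordinal rt) w by rewrite -leq_Nidx.
by have := XB (Ordinal rt) ag; rewrite -(agree_obs_hist ag).
Qed.

Lemma ev_fixed_sub_random : ev_fixed X B a `<=` ev_random X B A a.
Proof. by move=> w XB; rewrite ev_randomE => r _; exact: XB. Qed.

Lemma ev_random_agree_full w :
  ev_random X B A a w -> agree_full A a w -> ev_fixed X B a w.
Proof.
by rewrite ev_randomE => XB ag r; apply: XB; exact: agree_full_agree.
Qed.

End action_histories.

Section measurable_events.
Context {d0 : measure_display} {Om : measurableType d0} {R : realType}.
Variables (Act : nat -> finType) (A : forall s : nat, Om -> Act s).
Variables (t : nat) (a : hist Act t) (dim : nat -> nat).
Variables (X : forall s : nat, hist Act s -> Om -> 'rV[R]_(dim s)).
Variables (B : forall s : nat, set 'rV[R]_(dim s)).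
Hypothesis mA : forall s, (0 < s <= t)%N -> forall C : set (Act s),
  measurable (A s @^-1` C).
Hypothesis mXB : forall r : 'I_t.+1,
  measurable (X r (Defs.prefix a (r := r)) @^-1` B r).

Let measurable_agree_with k (h : hist Act k) : (k <= t)%N ->
  measurable [set w | [forall i : 'I_k, A i.+1 w == h i]].
Proof.
move=> kt; have -> : [set w | [forall i : 'I_k, A i.+1 w == h i]] =
    [set w | forall i : 'I_k, (A i.+1 @^-1` [set h i]) w].
  apply/seteqP; split => w /= => [/forallP ag i|ag]; first exact/eqP.
  by apply/forallP => i; exact/eqP/ag.
apply: measurable_forall_fin => i; apply: mA.
exact: leq_trans (ltn_ord i) kt.
Qed.

Lemma measurable_agree (r : 'I_t.+1) : measurable [set w | agree A a r w].
Proof. by apply: measurable_agree_with; rewrite -ltnS. Qed.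

Lemma measurable_agree_full : measurable [set w | agree_full A a w].
Proof. exact: measurable_agree_with. Qed.

Lemma measurable_ev_fixed : measurable (ev_fixed X B a).
Proof. exact: measurable_forall_fin mXB. Qed.

Lemma measurable_ev_random : measurable (ev_random X B A a).
Proof.
rewrite ev_randomE; have -> : [set w | forall r : 'I_t.+1, agree A a r w ->
      B r (X r (Defs.prefix a (r := r)) w)] =
    [set w | forall r : 'I_t.+1, (~` [set w | agree A a r w] `|`
      X r (Defs.prefix a (r := r)) @^-1` B r) w].
  apply/seteqP; split => w /= XB r; last by move=> ag; case: (XB r).
  have [ag|nag] := boolP (agree A a r w); last by left; exact/negP.
  by right; exact: XB.
apply: measurable_forall_fin => r; apply: measurableU (mXB r).
exact/measurableC/measurable_agree.
Qed.

End measurable_events.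

Theorem theorem2 (R : realType) (T : nat) (d : nat -> nat)
  (Act : nat -> finType)
  (d0 : measure_display) (Om : measurableType d0) (P : probability Om R)
  (X : forall s : nat, hist Act s -> Om -> 'rV[R]_(d s))
  (A : forall s : nat, Om -> Act s)
  (t : nat) (Y : hist Act t -> Om -> R)
  (a : hist Act t) (B : forall s : nat, set 'rV[R]_(d s)) (ylo yhi : R) :
  (1 <= T)%N -> (1 <= t <= T)%N ->
  (* X_s(a_{1:s}) are R^{d_s}-valued random variables, s = 0..T *)
  (forall (s : nat) (h : hist Act s), (s <= T)%N ->
     forall C : set 'rV[R]_(d s), rV_borel C -> measurable (X s h @^-1` C)) ->
  (* A_s are A_s-valued random variables (discrete sigma-algebra), s = 1..T *)
  (forall s : nat, (1 <= s <= T)%N ->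
     forall C : set (Act s), measurable (A s @^-1` C)) ->
  (* Y(a'_{1:t}) real random variables *)
  (forall h : hist Act t, measurable_fun setT (Y h)) ->
  (* B_s measurable, s = 0..t *)
  (forall s : nat, (s <= t)%N -> rV_borel (B s)) ->
  (0 < P (ev_fixed X B a))%E ->
  cond_prob P [set w | ylo <= Y a w <= yhi] (ev_fixed X B a) = 1%E ->
  (cond_exp P (Ybound A a Y ylo) (ev_random X B A a)
     <= cond_exp P (Y a) (ev_fixed X B a)
     <= cond_exp P (Ybound A a Y yhi) (ev_random X B A a))%E.
Proof.
move=> _ /andP[_ tT] mX mA mY mB PF0 Y_bnd.
have mAt s : (0 < s <= t)%N -> forall C : set (Act s), measurable (A s @^-1` C).
  by case/andP=> s0 st; apply: mA; rewrite s0 (leq_trans st tT).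
have mXB (r : 'I_t.+1) : measurable (X r (Defs.prefix a (r := r)) @^-1` B r).
  have rt : (r <= t)%N by rewrite -ltnS.
  exact: mX (leq_trans rt tT) _ (mB r rt).
rewrite !YboundE; apply: cond_exp_extend_bounds => //.
- exact: measurable_ev_fixed.
- exact: measurable_ev_random.
- exact: measurable_agree_full.
- exact: ev_fixed_sub_random.
- exact: ev_random_agree_full.
Qed.
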